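(* Let $p$ be an odd prime, $P,Q\in\mathbb Z_p$ with $PQ\not\equiv0\pmod p$. Then $$U_{\frac{p-1}2}(P,Q)\equiv\frac{2P}Q\Big(\frac Pp\Big)\sum_{k=1}^{[\frac{p+1}4]}\binom{4k-2}{2k-1}\Big(\frac Q{4P^2}\Big)^k\pmod p.$$
   Context: The Lucas sequence $U_n(P,Q)$ is defined by $U_0=0$, $U_1=1$, $U_{n+1}=PU_n-QU_{n-1}$ for $n\ge1$. $[x]$ is the greatest integer $\le x$; $\mathbb Z_p$ is the set of rational numbers whose denominator is not divisible by $p$; $(\frac{\cdot}{p})$ is the Legendre symbol. *)

From HB Require Import structures.
From mathcomp Require Import all_boot all_order all_algebra.
Set Implicit Arguments. Unset Strict Implicit. Unset Printing Implicit Defensive.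
Import Order.TTheory GRing.Theory Num.Theory.
Local Open Scope ring_scope.

(* Lucas sequence over a ring: lucasUV P Q n = (U_n, U_{n+1}). *)
Fixpoint lucasUV (R : pzRingType) (P Q : R) (n : nat) : R * R :=
  match n with
  | 0%N => (0, 1)
  | n'.+1 => let (u, v) := lucasUV P Q n' in (v, P * v - Q * u)
  end.
Definition lucasU (R : pzRingType) (P Q : R) (n : nat) : R := (lucasUV P Q n).1.

Definition in_Zp_rat (p : nat) (x : rat) : bool := ~~ (p%:Z %| denq x)%Z.

(* x ≡ y (mod p) for x, y ∈ Z_p : x - y ∈ p Z_p. *)
Definition congq (p : nat) (x y : rat) : bool :=
  [&& in_Zp_rat p x, in_Zp_rat p y & (p%:Z %| numq (x - y))%Z].

Definition legendreq (p : nat) (x : rat) : int :=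
  if congq p x 0 then 0
  else if [exists a : 'I_p, congq p ((nat_of_ord a)%:R ^+ 2) x] then 1 else -1.

(* Write p = 2m + 3, so that (p-1)/2 = m + 1 and [(p+1)/4] = [(m+2)/2].
   The proof has four ingredients, developed in this order.
   1. Double factorials: C(4j+2, 2j+1) j! = 2^(j+1) (2j+3)(2j+5)...(4j+1).
   2. An explicit formula for Lucas sequences over any commutative ring:
      U_(m+1) = P^m sum_(j <= m/2) C(m-j, j) x^j  whenever  P^2 x = -Q.
   3. Modulo p = 2m+3 the falling factorial 2^j (m-j)(m-j-1)...(m-2j+1) is
      (-1)^j (2j+3)...(4j+1), which with 1 gives, for 2j <= m,
      2^(2j+1) C(m-j, j) = (-1)^j C(4j+2, 2j+1)  in F_p.
      Substituting this into 2 with x = -Q/P^2 yields the theorem in F_p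
      (lemma lucas_half_Fp).
   4. Euler's criterion in finite fields of odd order, and the reduction map
      Z_p -> F_p, x |-> num x / den x, which respects the ring operations,
      inverses of units and Lucas sequences, turns congruence mod p into
      equality, and sends the Legendre symbol (P/p) to P^((p-1)/2). *)

From HB Require Import structures.
From mathcomp Require Import all_boot all_order all_algebra cyclic finfield.
From mathcomp Require Import ring zify.
Set Implicit Arguments. Unset Strict Implicit. Unset Printing Implicit Defensive.
Import GRing.Theory.

Definition odd_fact (k : nat) : nat := \prod_(i < k) (2 * i + 1).

Definition odd_block (j : nat) : nat := \prod_(i < j) (2 * (j.+1 + i) + 1).

Lemma odd_factS (k : nat) : odd_fact k.+1 = odd_fact k * (2 * k + 1).
Proof. by rewrite /odd_fact big_ord_recr. Qed.

Lemma odd_fact_split (j : nat) : odd_fact (2 * j + 1) = odd_fact j.+1 * odd_block j.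
Proof. by rewrite /odd_fact /odd_block (_ : 2 * j + 1 = j.+1 + j) ?big_split_ord //; lia. Qed.

Lemma fact_double (k : nat) : (2 * k)`! = 2 ^ k * k`! * odd_fact k.
Proof.
elim: k => [|k IH]; first by rewrite /odd_fact big_ord0.
by rewrite (_ : 2 * k.+1 = (2 * k).+2) ?factS ?IH ?odd_factS ?expnS; [ring | lia].
Qed.

Lemma fact_double_odd (k : nat) : (2 * k + 1)`! = 2 ^ k * k`! * odd_fact k.+1.
Proof. by rewrite addn1 factS fact_double odd_factS; ring. Qed.

Lemma binom_odd_block (j : nat) :
  odd_block j * 2 ^ j.+1 = 'C(4 * j + 2, 2 * j + 1) * j`!.
Proof.
have pos : 0 < (2 * j + 1)`! * odd_fact j.+1 * 2 ^ j.
  rewrite !muln_gt0 fact_gt0 expn_gt0 /= andbT /odd_fact.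
  by rewrite prodn_gt0 // => i; rewrite addn1.
apply/eqP; rewrite -(eqn_pmul2r pos); apply/eqP; transitivity (4 * j + 2)`!.
  rewrite (_ : 4 * j + 2 = 2 * (2 * j + 1)) ?fact_double ?odd_fact_split; last lia.
  by rewrite (_ : 2 * j + 1 = j.+1 + j) ?expnD; [ring | lia].
have binF : 'C(4 * j + 2, 2 * j + 1) * ((2 * j + 1)`! * (2 * j + 1)`!) = (4 * j + 2)`!.
  by rewrite -{3}(_ : 4 * j + 2 - (2 * j + 1) = 2 * j + 1) ?bin_fact //; lia.
by rewrite -binF {1}fact_double_odd; ring.
Qed.

Lemma binS_diag (m j : nat) :
  'C(m.+2 - j.+1, j.+1) = 'C(m.+1 - j.+1, j.+1) + 'C(m - j, j).
Proof.
rewrite !subSS; have [le_jm | lt_mj] := leqP j m; first by rewrite subSn // binS.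
have [-> ->] : m.+1 - j = 0 /\ m - j = 0 by lia.
by rewrite !bin0n; case: j lt_mj.
Qed.

Local Open Scope ring_scope.

Lemma lucas_rec (R : pzRingType) (P Q : R) (n : nat) :
  lucasU P Q n.+2 = P * lucasU P Q n.+1 - Q * lucasU P Q n.
Proof. by rewrite /lucasU /=; case: (lucasUV P Q n). Qed.

Section LucasExplicit.

Variable R : comPzRingType.

Definition diag_binom_sum (x : R) (m : nat) : R :=
  \sum_(j < m./2.+1) 'C(m - j, j)%:R * x ^+ j.

(* Terms with 2j > m vanish, so any range of summation past m/2 can be used. *)
Lemma diag_binom_sumE (x : R) (m n : nat) : (m < 2 * n)%N ->
  \sum_(j < n) 'C(m - j, j)%:R * x ^+ j = diag_binom_sum x m.
Proof.
move=> m_lt; pose F j := 'C(m - j, j)%:R * x ^+ j.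
rewrite /diag_binom_sum -!(big_mkord xpredT F).
have le_half : (m./2.+1 <= n)%N by rewrite ltn_half_double -muln2 mulnC.
rewrite (big_cat_nat (leq0n _) le_half) /= [X in _ + X]big1_seq ?addr0 //.
move=> j /andP[_]; rewrite mem_index_iota => /andP[lt_half _].
rewrite /F bin_small ?mul0r //; move: lt_half; rewrite ltn_half_double -muln2; lia.
Qed.

Lemma diag_binom_sumS (x : R) (m : nat) :
  diag_binom_sum x m.+2 = diag_binom_sum x m.+1 + x * diag_binom_sum x m.
Proof.
rewrite -(diag_binom_sumE x (n := m.+3)); last lia.
rewrite -(diag_binom_sumE x (m := m.+1) (n := m.+3)); last lia.
rewrite -(diag_binom_sumE x (m := m) (n := m.+2)); last lia.
rewrite big_ord_recl [in X in _ = X + _]big_ord_recl /= !subn0 !bin0 -addrA.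
rewrite mulr_sumr -big_split /=; congr (_ + _).
by apply: eq_bigr => j _; rewrite /bump /= !add1n binS_diag natrD exprS; ring.
Qed.

(* Explicit formula  U_(m+1) = sum_j C(m-j, j) P^(m-2j) (-Q)^j,  written with an
   element x such that P^2 x = -Q (so that P need not be invertible). *)
Lemma lucasU_diag_binom_sum (P Q x : R) (m : nat) : P ^+ 2 * x = - Q ->
  lucasU P Q m.+1 = P ^+ m * diag_binom_sum x m.
Proof.
move=> Px; suff : lucasU P Q m.+1 = P ^+ m * diag_binom_sum x m /\
                 lucasU P Q m.+2 = P ^+ m.+1 * diag_binom_sum x m.+1 by case.
elim: m => [|m [IH1 IH2]].
  by rewrite /diag_binom_sum /lucasU /= !big_ord1 !bin0; split; ring.
by split=> //; rewrite lucas_rec IH2 IH1 diag_binom_sumS -[Q]opprK -Px !exprS; ring.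
Qed.

End LucasExplicit.

Section BinomialModP.

Variables p m : nat.
Hypothesis p_pr : prime p.
Hypothesis p_eq : p = (2 * m + 3)%N.

Lemma natr_Fp_eq0 (k : nat) : (0 < k < p)%N -> (k%:R : 'F_p) != 0.
Proof.
by move=> k_bd; rewrite -(dvdn_pcharf (pchar_Fp p_pr)); apply/negP => /dvdn_leq; lia.
Qed.

Lemma four_Fp_neq0 : (4 : 'F_p) != 0.
Proof.
have two0 : (2 : 'F_p) != 0 by apply: natr_Fp_eq0; lia.
by rewrite -[4]/(2 * 2)%:R natrM mulf_neq0.
Qed.

(* Modulo p = 2m+3 the factors of the falling factorial (m-j)(m-j-1)...(m-2j+1),
   doubled, are (up to sign) the odd numbers 2j+3, ..., 4j+1. *)
Lemma ffact_mod_p (j : nat) : (2 * j <= m)%N ->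
  (('C(m - j, j) * j`!)%:R : 'F_p) * 2 ^+ j = (-1) ^+ j * (odd_block j)%:R.
Proof.
move=> le_jm; rewrite bin_ffact ffact_prod /odd_block !natr_prod.
rewrite -[in 2 ^+ j](card_ord j) -[in (-1) ^+ j](card_ord j) -!prodr_const.
rewrite -!big_split /=; apply: eq_bigr => i _.
have : (((m - j - i) * 2 + (2 * (j.+1 + i) + 1))%:R : 'F_p) = 0.
  by rewrite (_ : (_ + _)%N = p) ?pchar_Fp_0 //; have := ltn_ord i; lia.
by rewrite natrD natrM => /eqP; rewrite addr_eq0 => /eqP ->; rewrite mulN1r.
Qed.

Lemma binom_mod_p (j : nat) : (2 * j <= m)%N ->
  ('C(m - j, j)%:R : 'F_p) * 2 ^+ (2 * j + 1) =
  (-1) ^+ j * 'C(4 * j + 2, 2 * j + 1)%:R.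
Proof.
move=> le_jm; have fact0 : (j`!%:R : 'F_p) != 0.
  elim: j le_jm => [|j IH] le_jm; first by rewrite oner_eq0.
  by rewrite factS natrM mulf_neq0 ?IH ?natr_Fp_eq0 //; lia.
apply: (mulIf fact0); transitivity ((-1) ^+ j * (odd_block j)%:R * 2 ^+ j.+1 : 'F_p).
  by rewrite -ffact_mod_p // natrM (_ : (2 * j + 1 = j + j.+1)%N) ?exprD; [ring | lia].
by rewrite -mulrA -natrX -natrM binom_odd_block natrM mulrA.
Qed.

(* The theorem in F_p, where (p-1)/2 = m+1, [(p+1)/4] = [(m+2)/2], and u^(m+1)
   stands for the Legendre symbol. *)
Lemma lucas_half_Fp (u v : 'F_p) : u != 0 -> v != 0 ->
  lucasU u v m.+1 = 2 * u / v * u ^+ m.+1 *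
    \sum_(1 <= k < ((m.+2) %/ 2).+1)
       'C(4 * k - 2, 2 * k - 1)%:R * (v / (4 * u ^+ 2)) ^+ k.
Proof.
move=> u0 v0; have four0 := four_Fp_neq0.
rewrite (lucasU_diag_binom_sum m (x := - v / u ^+ 2)); last first.
  by rewrite mulrC divfK // expf_neq0.
rewrite -(diag_binom_sumE _ (n := (m.+2 %/ 2)%N)); last lia.
rewrite big_add1 /= big_mkord !mulr_sumr; apply: eq_bigr => j _.
have le_jm : (2 * j <= m)%N by have := ltn_ord j; lia.
rewrite (_ : (4 * j.+1 - 2 = 4 * j + 2)%N); last lia.
rewrite (_ : (2 * j.+1 - 1 = 2 * j + 1)%N); last lia.
have -> : ('C(4 * j + 2, 2 * j + 1)%:R : 'F_p) =
          (-1) ^+ j * ('C(m - j, j)%:R * 2 ^+ (2 * j + 1)).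
  by rewrite binom_mod_p // mulrA -exprD -signr_odd addnn odd_double mul1r.
have -> : (- v / u ^+ 2) ^+ j = (-1) ^+ j * v ^+ j / (u ^+ j) ^+ 2.
  by rewrite exprMn exprVn exprAC [(- v) ^+ j]exprNn.
have -> : (2 : 'F_p) ^+ (2 * j + 1) = 2 * 4 ^+ j.
  by rewrite addn1 exprS exprM expr2 -natrM.
have -> : (v / (4 * u ^+ 2)) ^+ j.+1 = v * v ^+ j / (4 * 4 ^+ j * (u ^+ 2 * (u ^+ j) ^+ 2)).
  by rewrite exprMn exprVn !exprMn !exprS; congr (_ / _); ring.
have uj0 : u ^+ j != 0 by rewrite expf_neq0.
have fourj0 : (4 : 'F_p) ^+ j != 0 by rewrite expf_neq0.
by rewrite [u ^+ m.+1]exprS; field; rewrite uj0 fourj0 u0 v0 four0.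
Qed.

End BinomialModP.

Section EulerCriterion.

Variable F : finFieldType.

Lemma fermat_finField (w : F) : w != 0 -> w ^+ #|F|.-1 = 1.
Proof.
move=> w0; apply: (mulfI w0); rewrite -exprS prednK ?expf_card ?mulr1 //.
by apply/card_gt0P; exists w.
Qed.

Lemma finField_prim_root : exists z : F, #|F|.-1.-primitive_root z.
Proof.
pose rs := [seq w <- enum F | w != 0].
have size_rs : size rs = #|F|.-1.
  rewrite -(cardC1 (0 : F)) cardE /rs enumT /enum_mem; congr size; exact: eq_filter.
have rs_unity : all #|F|.-1.-unity_root rs.
  by apply/allP => w; rewrite mem_filter unity_rootE => /andP[/fermat_finField ->].
have q1_gt0 : (0 < #|F|.-1)%N.
  by rewrite -(cardC1 (0 : F)); apply/card_gt0P; exists 1; rewrite !inE oner_eq0.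
have := has_prim_root q1_gt0 rs_unity (filter_uniq _ (enum_uniq F)).
by rewrite size_rs leqnn => /(_ isT)/hasP[z _ zprim]; exists z.
Qed.

Hypothesis oddF : odd #|F|.

Lemma euler_criterion (u : F) : u != 0 ->
  u ^+ ((#|F| - 1) %/ 2) = if [exists w : F, w ^+ 2 == u] then 1 else -1.
Proof.
move=> u0; set n := ((#|F| - 1) %/ 2)%N.
have q_even : #|F|.-1 = (2 * n)%N.
  by have := odd_double_half #|F|; rewrite oddF /n; lia.
have q_gt1 : (1 < #|F|)%N := card_finNzRing_gt1 F.
have n_gt0 : (0 < n)%N by clearbody n; lia.
case: ifP => [/existsP[w /eqP wu] | nonsquare].
  have w0 : w != 0 by apply: contraNneq u0 => w0; rewrite -wu w0 expr0n.
  by rewrite -wu -exprM -q_even fermat_finField.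
have [z zprim] := finField_prim_root.
have [i ui] := prim_rootP zprim (fermat_finField u0).
have zn : z ^+ n = -1.
  have : (z ^+ n) ^+ 2 == 1 by rewrite -exprM mulnC -q_even prim_expr_order.
  rewrite sqrf_eq1 => /orP[|/eqP //].
  by rewrite -(prim_order_dvd zprim) q_even => /dvdn_leq; lia.
have i_odd : odd i.
  apply: contraFT nonsquare => i_even; apply/existsP; exists (z ^+ i./2).
  by rewrite ui -exprM muln2 -{2}(odd_double_half i) (negbTE i_even).
by rewrite ui -exprM mulnC exprM zn -signr_odd i_odd.
Qed.

End EulerCriterion.

Section Reduction.

Variable p : nat.
Hypothesis p_pr : prime p.

(* The reduction modulo p of a rational number; meaningful on Z_p. *)
Definition red (x : rat) : 'F_p := (numq x)%:~R / (denq x)%:~R.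

Definition reduces (x : rat) (u : 'F_p) : Prop := in_Zp_rat p x /\ red x = u.

Lemma intr_Fp_eq0 (z : int) : ((z%:~R : 'F_p) == 0) = (p%:Z %| z)%Z.
Proof. by rewrite (dvdz_pcharf (pchar_Fp p_pr)). Qed.

Lemma ndvdz_mul (a b : int) :
  ~~ (p%:Z %| a)%Z -> ~~ (p%:Z %| b)%Z -> ~~ (p%:Z %| a * b)%Z.
Proof. by rewrite -!intr_Fp_eq0 rmorphM /= mulf_eq0 => /negbTE-> /negbTE->. Qed.

Lemma reduces_frac (x : rat) (a b : int) :
  x * b%:~R = a%:~R -> ~~ (p%:Z %| b)%Z -> reduces x (a%:~R / b%:~R).
Proof.
move=> xb pNb; have cross : numq x * b = a * denq x.
  by apply: (@intr_inj rat); rewrite !intrM numqE -xb; ring.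
have pNden : ~~ (p%:Z %| denq x)%Z.
  apply/negP => pden; have pnum : (p%:Z %| numq x)%Z.
    by apply/negPn/negP => /ndvdz_mul/(_ pNb); rewrite cross dvdz_mull.
  have := coprime_num_den x; rewrite /coprime => /eqP gcd1.
  have : (p %| gcdn `|numq x| `|denq x|)%N by rewrite dvdn_gcd; apply/andP.
  by rewrite gcd1 dvdn1 => /eqP p1; move: p_pr; rewrite p1.
split=> //; rewrite /red.
have den0 : ((denq x)%:~R : 'F_p) != 0 by rewrite intr_Fp_eq0.
have b0 : (b%:~R : 'F_p) != 0 by rewrite intr_Fp_eq0.
have crossF : ((numq x)%:~R : 'F_p) * b%:~R = a%:~R * (denq x)%:~R.
  by rewrite -!intrM cross.
by apply/eqP; rewrite eqr_div // crossF mulrC.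
Qed.

Lemma reducesP (x : rat) (u : 'F_p) : reduces x u ->
  [/\ x * (denq x)%:~R = (numq x)%:~R, ~~ (p%:Z %| denq x)%Z,
      ((denq x)%:~R : 'F_p) != 0 & u = (numq x)%:~R / (denq x)%:~R].
Proof. by case=> xZp <-; split; rewrite ?numqE ?intr_Fp_eq0. Qed.

Lemma reduces_int (z : int) : reduces z%:~R z%:~R.
Proof.
have := @reduces_frac z%:~R z 1; rewrite mulr1z mulr1 mulr1z divr1; apply=> //.
by rewrite -intr_Fp_eq0 mulr1z oner_eq0.
Qed.

Lemma reduces_nat (n : nat) : reduces n%:R n%:R.
Proof. by have := reduces_int n; rewrite !pmulrn. Qed.

Lemma reduces_add x y u v : reduces x u -> reduces y v -> reduces (x + y) (u + v).
Proof.
move=> /reducesP[xd pdx dx0 ->] /reducesP[yd pdy dy0 ->].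
have := @reduces_frac (x + y) (numq x * denq y + numq y * denq x) (denq x * denq y).
rewrite !intrD !intrM -xd -yd addf_div //.
by apply; [ring | exact: ndvdz_mul].
Qed.

Lemma reduces_mul x y u v : reduces x u -> reduces y v -> reduces (x * y) (u * v).
Proof.
move=> /reducesP[xd pdx dx0 ->] /reducesP[yd pdy dy0 ->].
have := @reduces_frac (x * y) (numq x * numq y) (denq x * denq y).
rewrite !intrM -xd -yd mulf_div.
by apply; [ring | exact: ndvdz_mul].
Qed.

Lemma reduces_opp x u : reduces x u -> reduces (- x) (- u).
Proof.
move=> /reducesP[xd pdx _ ->].
by have := @reduces_frac (- x) (- numq x) (denq x); rewrite !intrN -xd mulNr mulNr; apply.
Qed.

Lemma reduces_sub x y u v : reduces x u -> reduces y v -> reduces (x - y) (u - v).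
Proof. by move=> xu yv; apply/reduces_add/reduces_opp. Qed.

Lemma reduces_inv x u : reduces x u -> u != 0 -> reduces x^-1 u^-1.
Proof.
move=> /reducesP[xd pdx dx0 ->] u0.
have num0 : ((numq x)%:~R : 'F_p) != 0 by apply: contraNneq u0 => ->; rewrite mul0r.
have x0 : x != 0 by apply: contraNneq num0 => ->.
have := @reduces_frac x^-1 (denq x) (numq x); rewrite invf_div; apply.
  by rewrite -xd mulrA mulVf ?mul1r.
by rewrite -intr_Fp_eq0.
Qed.

Lemma reduces_exp x u n : reduces x u -> reduces (x ^+ n) (u ^+ n).
Proof.
move=> xu; elim: n => [|n IH]; first exact: reduces_nat 1.
by rewrite !exprS; apply: reduces_mul.
Qed.

Lemma reduces_sum (I : Type) (r : seq I) (P : pred I) (f : I -> rat) (g : I -> 'F_p) :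
  (forall i, P i -> reduces (f i) (g i)) ->
  reduces (\sum_(i <- r | P i) f i) (\sum_(i <- r | P i) g i).
Proof.
move=> fg; apply: (big_ind2 reduces) => //; first exact: reduces_nat 0.
by move=> x1 u1 x2 u2; apply: reduces_add.
Qed.

Lemma reduces_congq x y u v : reduces x u -> reduces y v -> congq p x y = (u == v).
Proof.
move=> xu yv; have /reducesP[_ _ d0 uv] := reduces_sub xu yv.
rewrite /congq xu.1 yv.1 /= -subr_eq0 uv -(inj_eq (mulIf d0)) mul0r divfK //.
by rewrite intr_Fp_eq0.
Qed.

Lemma congq_reduces x y u : reduces x u -> reduces y u -> congq p x y.
Proof. by move=> xu yu; rewrite (reduces_congq xu yu). Qed.

Lemma reduces_lucas (P Q : rat) (u v : 'F_p) (n : nat) :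
  reduces P u -> reduces Q v -> reduces (lucasU P Q n) (lucasU u v n).
Proof.
move=> Pu Qv; suff : reduces (lucasU P Q n) (lucasU u v n) /\
                     reduces (lucasU P Q n.+1) (lucasU u v n.+1) by case.
elim: n => [|n [IH1 IH2]]; first by split; [exact: reduces_nat 0 | exact: reduces_nat 1].
by split=> //; rewrite !lucas_rec; apply: reduces_sub; apply: reduces_mul.
Qed.

Lemma exists_sqr_Fp (u : 'F_p) :
  [exists a : 'I_p, (a%:R : 'F_p) ^+ 2 == u] = [exists w : 'F_p, w ^+ 2 == u].
Proof.
apply/existsP/existsP => [[a sq] | [w sq]]; first by exists a%:R.
have w_lt : (w < p)%N by have := ltn_ord w; rewrite [in X in (_ < X)%N -> _]Fp_cast.
by exists (Ordinal w_lt); rewrite /= natr_Zp.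
Qed.

Lemma reduces_legendreq (P : rat) (u : 'F_p) : odd p -> reduces P u -> u != 0 ->
  reduces (legendreq p P)%:~R (u ^+ ((p - 1) %/ 2)).
Proof.
move=> p_odd Pu u0; have oddF : odd #|'F_p| by rewrite card_Fp.
have := euler_criterion oddF u0; rewrite card_Fp // => ->.
rewrite /legendreq (reduces_congq Pu (reduces_nat 0)) (negbTE u0) -exists_sqr_Fp.
rewrite (eq_existsb (fun a : 'I_p => reduces_congq (reduces_exp 2 (reduces_nat a)) Pu)).
by case: ifP => _; [exact: reduces_int 1 | exact: reduces_int (-1)].
Qed.

End Reduction.

Theorem lemma3p2 (p : nat) (P Q : rat) :
  prime p -> odd p -> in_Zp_rat p P -> in_Zp_rat p Q -> ~~ congq p (P * Q) 0 ->
  congq p (lucasU P Q ((p - 1) %/ 2))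
    (2 * P / Q * (legendreq p P)%:~R *
     \sum_(1 <= k < ((p + 1) %/ 4).+1)
        ('C(4 * k - 2, 2 * k - 1))%:R * (Q / (4 * P ^+ 2)) ^+ k).
Proof.
move=> p_pr p_odd PZp QZp PQ_nz.
have [m p_eq] : exists m, p = (2 * m + 3)%N.
  move: (odd_double_half p) (prime_gt1 p_pr); rewrite p_odd -muln2.
  by exists p./2.-1; lia.
have half : ((p - 1) %/ 2 = m.+1)%N by lia.
have Pu : reduces P (red p P) by []; have Qv : reduces Q (red p Q) by [].
set u := red p P in Pu; set v := red p Q in Qv.
have : u * v != 0.
  by rewrite -(reduces_congq p_pr (reduces_mul p_pr Pu Qv) (reduces_nat p_pr 0)).
rewrite mulf_eq0 negb_or => /andP[u0 v0].
have legendre_u : reduces (legendreq p P)%:~R (u ^+ m.+1).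
  by rewrite -half; apply: reduces_legendreq.
apply: (congq_reduces p_pr (reduces_lucas p_pr _ Pu Qv)).
rewrite half (_ : ((p + 1) %/ 4 = m.+2 %/ 2)%N) ?lucas_half_Fp //; last lia.
apply: (reduces_mul p_pr); last apply: (reduces_sum p_pr) => k _.
  apply: (reduces_mul p_pr _ legendre_u).
  apply: (reduces_mul p_pr _ (reduces_inv p_pr Qv v0)).
  by apply: (reduces_mul p_pr _ Pu); apply: reduces_nat.
apply: (reduces_mul p_pr); first exact: reduces_nat.
apply/(reduces_exp p_pr)/(reduces_mul p_pr Qv)/(reduces_inv p_pr).
  by apply: (reduces_mul p_pr); [apply: reduces_nat | apply: reduces_exp].
by rewrite mulf_neq0 ?expf_neq0 // (four_Fp_neq0 p_pr p_eq).
Qed.
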